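(* Let $A$ be a braided group in $\mathcal C$, $B$ a braided group in $\mathcal{YD}(\mathcal C)^A_A$, and $C$ a braided group in $\mathcal{YD}(\mathcal C)^{A\rtimes B}_{A\rtimes B}$, which is identified (as a braided category) with $\mathcal{YD}(\mathcal{YD}(\mathcal C)^A_A)^B_B$ via the action $\mu^B_r\circ(\mu^A_r\otimes B)$ and coaction $(\Delta^A_r\otimes B)\circ\Delta^B_r$. Then the braided groups $(A\rtimes B)\rtimes C$ and $A\rtimes(B\rtimes C)$ in $\mathcal C$, both with underlying object $A\otimes B\otimes C$, coincide.
   Context: $\mathcal C$ is a braided monoidal category, assumed strict, with tensor product $\otimes$ and braiding $\Psi$. A braided group in a braided category $(\mathcal D,\Phi)$ is a bialgebra $(A,\mu,\eta,\Delta,\epsilon)$ (with $\Delta\circ\mu=(\mu\otimes\mu)\circ(A\otimes\Phi_{A,A}\otimes A)\circ(\Delta\otimes\Delta)$ and unit/counit compatibilities) with antipode. For a bialgebra $A$ in $(\mathcal D,\Phi)$, $\mathcal{YD}(\mathcal D)^A_A$ is the braided category of right crossed modules: right modules $\mu_r$ and comodules $\Delta_r$ with $(X\otimes\mu)\circ(\Phi_{A,X}\otimes A)\circ(A\otimes(\Delta_r\circ\mu_r))\circ(\Phi_{X,A}\otimes A)\circ(X\otimes\Delta)=(\mu_r\otimes\mu)\circ(X\otimes\Phi_{A,A}\otimes A)\circ(\Delta_r\otimes\Delta)$, with tensor product action $(\mu^X_r\otimes\mu^Y_r)\circ(X\otimes\Phi_{Y,A}\otimes A)\circ(X\otimes Y\otimes\Delta)$,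 coaction $(X\otimes Y\otimes\mu)\circ(X\otimes\Phi_{A,Y}\otimes A)\circ(\Delta^X_r\otimes\Delta^Y_r)$, and braiding $(Y\otimes\mu^X_r)\circ(\Phi_{X,Y}\otimes A)\circ(X\otimes\Delta^Y_r)$. For a braided group $A$ in $(\mathcal D,\Phi)$ and a braided group $B$ in $\mathcal{YD}(\mathcal D)^A_A$ (action $\mu^B_r$, coaction $\Delta^B_r$), the cross product $A\rtimes B$ is the braided group in $\mathcal D$ on $A\otimes B$ with multiplication $(\mu_A\otimes\mu_B)\circ(A\otimes A\otimes\mu^B_r\otimes B)\circ(A\otimes\Phi_{B,A}\otimes A\otimes B)\circ(A\otimes B\otimes\Delta_A\otimes B)$, unit $\eta_A\otimes\eta_B$, comultiplication $(A\otimes B\otimes\mu_A\otimes B)\circ(A\otimes\Phi_{A,B}\otimes A\otimes B)\circ(A\otimes A\otimes\Delta^B_r\otimes B)\circ(\Delta_A\otimes\Delta_B)$, counit $\epsilon_A\otimes\epsilon_B$. Here $B\rtimes C$ is formed in $\mathcal D=\mathcal{YD}(\mathcal C)^A_A$ and is a braided group there. *)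

(* Data.  Strictness is encoded by the (propositional) object equalities
   [tensA], [tens1l], [tens1r]; morphisms are transported along them with
   [cast] below. *)
Record bsmcat := BSMCat {
  Ob : Type;
  Hom : Ob -> Ob -> Type;
  idm : forall a, Hom a a;
  comp : forall a b c, Hom b c -> Hom a b -> Hom a c;
  tens : Ob -> Ob -> Ob;
  tunit : Ob;
  tm : forall a b c d, Hom a b -> Hom c d -> Hom (tens a c) (tens b d);
  braid : forall a b, Hom (tens a b) (tens b a);
  tensA : forall a b c, tens a (tens b c) = tens (tens a b) c;
  tens1l : forall a, tens tunit a = a;
  tens1r : forall a, tens a tunit = a
}.

Arguments Hom {_} _ _.
Arguments idm {_} _.
Arguments comp {_ _ _ _} _ _.
Arguments tens {_} _ _.
Arguments tunit {_}.
Arguments tm {_ _ _ _ _} _ _.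
Arguments braid {_} _ _.
Arguments tensA {_} _ _ _.
Arguments tens1l {_} _.
Arguments tens1r {_} _.

Declare Scope cat_scope.
Open Scope cat_scope.
Notation "g ∘ f" := (comp g f) (at level 40, left associativity) : cat_scope.
Notation "f ⊗ g" := (tm f g) (at level 35, right associativity) : cat_scope.
Notation "a ⊗ₒ b" := (tens a b) (at level 35, right associativity) : cat_scope.

Definition cast {C : bsmcat} {x y : Ob C} (e : x = y) : Hom x y :=
  match e in _ = z return Hom x z with eq_refl => idm x end.

Record is_bsmcat (C : bsmcat) : Prop := {
  compA : forall (a b c d : Ob C) (f : Hom a b) (g : Hom b c) (h : Hom c d),
      h ∘ (g ∘ f) = (h ∘ g) ∘ f;
  comp1l : forall (a b : Ob C) (f : Hom a b), idm b ∘ f = f;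
  comp1r : forall (a b : Ob C) (f : Hom a b), f ∘ idm a = f;
  tm_comp : forall (a b c a' b' c' : Ob C) (f : Hom a b) (g : Hom b c)
      (f' : Hom a' b') (g' : Hom b' c'), (g ∘ f) ⊗ (g' ∘ f') = (g ⊗ g') ∘ (f ⊗ f');
  tm_id : forall a b : Ob C, idm a ⊗ idm b = idm (a ⊗ₒ b);
  tmA : forall (a b c d e f : Ob C) (x : Hom a b) (y : Hom c d) (z : Hom e f),
      cast (tensA b d f) ∘ (x ⊗ (y ⊗ z)) = ((x ⊗ y) ⊗ z) ∘ cast (tensA a c e);
  tm1l : forall (a b : Ob C) (f : Hom a b),
      cast (tens1l b) ∘ (idm tunit ⊗ f) = f ∘ cast (tens1l a);
  tm1r : forall (a b : Ob C) (f : Hom a b),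
      cast (tens1r b) ∘ (f ⊗ idm tunit) = f ∘ cast (tens1r a);
  braid_nat : forall (a b c d : Ob C) (f : Hom a c) (g : Hom b d),
      braid c d ∘ (f ⊗ g) = (g ⊗ f) ∘ braid a b;
  braid_iso : forall a b : Ob C, exists g : Hom (b ⊗ₒ a) (a ⊗ₒ b),
      g ∘ braid a b = idm _ /\ braid a b ∘ g = idm _;
  hex1 : forall a b c : Ob C,
      braid a (b ⊗ₒ c) = cast (tensA b c a) ∘ (idm b ⊗ braid a c)
        ∘ cast (eq_sym (tensA b a c)) ∘ (braid a b ⊗ idm c) ∘ cast (tensA a b c);
  hex2 : forall a b c : Ob C,
      braid (a ⊗ₒ b) c = cast (eq_sym (tensA c a b)) ∘ (braid a c ⊗ idm b)
        ∘ cast (tensA a c b) ∘ (idm a ⊗ braid b c) ∘ cast (eq_sym (tensA a b c))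
}.

(* All rebracketings below are casts along object equalities; which proof of
   the equality is used is irrelevant (proof irrelevance), we let a tactic
   produce one. *)
Ltac oeq := rewrite ?tens1l, ?tens1r; rewrite ?tensA; reflexivity.
Notation "'κ'" := (cast _) : cat_scope.

(** * Braided groups (bialgebras with antipode) w.r.t. a given self-braiding
    [Phi] of the underlying object.  (Only [Phi_{X,X}] enters the axioms.) *)
Definition bgroup {C : bsmcat} (X : Ob C) (Phi : Hom (X ⊗ₒ X) (X ⊗ₒ X))
  (mu : Hom (X ⊗ₒ X) X) (eta : Hom tunit X) (De : Hom X (X ⊗ₒ X))
  (ep : Hom X tunit) (S : Hom X X) : Prop.
refine (
  mu ∘ (mu ⊗ idm X) ∘ κ = mu ∘ (idm X ⊗ mu) /\
  mu ∘ (eta ⊗ idm X) = cast (tens1l X) /\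
  mu ∘ (idm X ⊗ eta) = cast (tens1r X) /\
  κ ∘ (De ⊗ idm X) ∘ De = (idm X ⊗ De) ∘ De /\
  (ep ⊗ idm X) ∘ De = cast (eq_sym (tens1l X)) /\
  (idm X ⊗ ep) ∘ De = cast (eq_sym (tens1r X)) /\
  De ∘ mu = (mu ⊗ mu) ∘ κ ∘ (idm X ⊗ (Phi ⊗ idm X)) ∘ κ ∘ (De ⊗ De) /\
  ep ∘ mu = cast (tens1l tunit) ∘ (ep ⊗ ep) /\
  De ∘ eta = (eta ⊗ eta) ∘ cast (eq_sym (tens1l tunit)) /\
  ep ∘ eta = idm tunit /\
  mu ∘ (S ⊗ idm X) ∘ De = eta ∘ ep /\
  mu ∘ (idm X ⊗ S) ∘ De = eta ∘ ep).
all: oeq.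
Defined.

Definition is_rmod {C : bsmcat} (X H : Ob C) (muH : Hom (H ⊗ₒ H) H)
  (etaH : Hom tunit H) (rho : Hom (X ⊗ₒ H) X) : Prop.
refine (rho ∘ (rho ⊗ idm H) ∘ κ = rho ∘ (idm X ⊗ muH) /\
        rho ∘ (idm X ⊗ etaH) = cast (tens1r X)).
all: oeq.
Defined.

Definition is_rcomod {C : bsmcat} (X H : Ob C) (DeH : Hom H (H ⊗ₒ H))
  (epH : Hom H tunit) (delta : Hom X (X ⊗ₒ H)) : Prop.
refine (κ ∘ (delta ⊗ idm H) ∘ delta = (idm X ⊗ DeH) ∘ delta /\
        (idm X ⊗ epH) ∘ delta = cast (eq_sym (tens1r X))).
all: oeq.
Defined.

Definition ydcond {C : bsmcat} (X H : Ob C) (muH : Hom (H ⊗ₒ H) H)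
  (DeH : Hom H (H ⊗ₒ H)) (rho : Hom (X ⊗ₒ H) X) (delta : Hom X (X ⊗ₒ H))
  (PhiHX : Hom (H ⊗ₒ X) (X ⊗ₒ H)) (PhiXH : Hom (X ⊗ₒ H) (H ⊗ₒ X))
  (PhiHH : Hom (H ⊗ₒ H) (H ⊗ₒ H)) : Prop.
refine ((idm X ⊗ muH) ∘ κ ∘ (PhiHX ⊗ idm H) ∘ κ ∘ (idm H ⊗ (delta ∘ rho))
          ∘ κ ∘ (PhiXH ⊗ idm H) ∘ κ ∘ (idm X ⊗ DeH)
        = (rho ⊗ muH) ∘ κ ∘ (idm X ⊗ (PhiHH ⊗ idm H)) ∘ κ ∘ (delta ⊗ DeH)).
all: oeq.
Defined.

Definition is_yd {C : bsmcat} (X H : Ob C) (muH : Hom (H ⊗ₒ H) H)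
  (etaH : Hom tunit H) (DeH : Hom H (H ⊗ₒ H)) (epH : Hom H tunit)
  (PhiHX : Hom (H ⊗ₒ X) (X ⊗ₒ H)) (PhiXH : Hom (X ⊗ₒ H) (H ⊗ₒ X))
  (PhiHH : Hom (H ⊗ₒ H) (H ⊗ₒ H))
  (rho : Hom (X ⊗ₒ H) X) (delta : Hom X (X ⊗ₒ H)) : Prop :=
  is_rmod X H muH etaH rho /\ is_rcomod X H DeH epH delta /\
  ydcond X H muH DeH rho delta PhiHX PhiXH PhiHH.

Definition tens_act {C : bsmcat} (X Y H : Ob C) (DeH : Hom H (H ⊗ₒ H))
  (rhoX : Hom (X ⊗ₒ H) X) (rhoY : Hom (Y ⊗ₒ H) Y) (PhiYH : Hom (Y ⊗ₒ H) (H ⊗ₒ Y))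
  : Hom ((X ⊗ₒ Y) ⊗ₒ H) (X ⊗ₒ Y).
refine ((rhoX ⊗ rhoY) ∘ κ ∘ (idm X ⊗ (PhiYH ⊗ idm H)) ∘ κ
          ∘ (idm X ⊗ (idm Y ⊗ DeH)) ∘ κ).
all: oeq.
Defined.

Definition tens_coact {C : bsmcat} (X Y H : Ob C) (muH : Hom (H ⊗ₒ H) H)
  (deltaX : Hom X (X ⊗ₒ H)) (deltaY : Hom Y (Y ⊗ₒ H)) (PhiHY : Hom (H ⊗ₒ Y) (Y ⊗ₒ H))
  : Hom (X ⊗ₒ Y) ((X ⊗ₒ Y) ⊗ₒ H).
refine ((idm (X ⊗ₒ Y) ⊗ muH) ∘ κ ∘ (idm X ⊗ (PhiHY ⊗ idm H)) ∘ κ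
          ∘ (deltaX ⊗ deltaY)).
all: oeq.
Defined.

Definition yd_braid {C : bsmcat} (X Y H : Ob C) (rhoX : Hom (X ⊗ₒ H) X)
  (deltaY : Hom Y (Y ⊗ₒ H)) (PhiXY : Hom (X ⊗ₒ Y) (Y ⊗ₒ X)) : Hom (X ⊗ₒ Y) (Y ⊗ₒ X).
refine ((idm Y ⊗ rhoX) ∘ κ ∘ (PhiXY ⊗ idm H) ∘ κ ∘ (idm X ⊗ deltaY)).
all: oeq.
Defined.

Definition unit_act {C : bsmcat} (H : Ob C) (epH : Hom H tunit)
  : Hom (tunit ⊗ₒ H) tunit := epH ∘ cast (tens1l H).
Definition unit_coact {C : bsmcat} (H : Ob C) (etaH : Hom tunit H)
  : Hom tunit (tunit ⊗ₒ H) := cast (eq_sym (tens1l H)) ∘ etaH.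

Definition is_ydmor {C : bsmcat} (X Y H : Ob C) (rhoX : Hom (X ⊗ₒ H) X)
  (deltaX : Hom X (X ⊗ₒ H)) (rhoY : Hom (Y ⊗ₒ H) Y) (deltaY : Hom Y (Y ⊗ₒ H))
  (f : Hom X Y) : Prop :=
  rhoY ∘ (f ⊗ idm H) = f ∘ rhoX /\ deltaY ∘ f = (f ⊗ idm H) ∘ deltaX.

(* [X] (with action [rho], coaction [delta]) is a braided group in the braided
   category of right crossed modules over [H]; [PhiHX], [PhiXH], [PhiHH],
   [PhiXX] are the braidings of the ambient braided category. *)
Definition is_bg_yd {C : bsmcat} (X H : Ob C) (muH : Hom (H ⊗ₒ H) H)
  (etaH : Hom tunit H) (DeH : Hom H (H ⊗ₒ H)) (epH : Hom H tunit)
  (PhiHX : Hom (H ⊗ₒ X) (X ⊗ₒ H)) (PhiXH : Hom (X ⊗ₒ H) (H ⊗ₒ X))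
  (PhiHH : Hom (H ⊗ₒ H) (H ⊗ₒ H)) (PhiXX : Hom (X ⊗ₒ X) (X ⊗ₒ X))
  (rho : Hom (X ⊗ₒ H) X) (delta : Hom X (X ⊗ₒ H))
  (mu : Hom (X ⊗ₒ X) X) (eta : Hom tunit X) (De : Hom X (X ⊗ₒ X))
  (ep : Hom X tunit) (S : Hom X X) : Prop :=
  let rhoXX := tens_act X X H DeH rho rho PhiXH in
  let deltaXX := tens_coact X X H muH delta delta PhiHX in
  is_yd X H muH etaH DeH epH PhiHX PhiXH PhiHH rho delta /\
  is_ydmor (X ⊗ₒ X) X H rhoXX deltaXX rho delta mu /\
  is_ydmor tunit X H (unit_act H epH) (unit_coact H etaH) rho delta eta /\
  is_ydmor X (X ⊗ₒ X) H rho delta rhoXX deltaXX De /\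
  is_ydmor X tunit H rho delta (unit_act H epH) (unit_coact H etaH) ep /\
  is_ydmor X X H rho delta rho delta S /\
  bgroup X (yd_braid X X H rho delta PhiXX) mu eta De ep S.

(* [X] with A-structure ([rhoXA], [deltaXA]) and B-structure ([rhoXB],
   [deltaXB]) is an object of YD(YD(C)^A_A)^B_B, where [B] (with A-structure
   [rhoBA], [deltaBA]) is a bialgebra in D = YD(C)^A_A.  The braiding of D is
   the crossed-module braiding [yd_braid]. *)
Definition is_yd_D {C : bsmcat} (A B X : Ob C)
  (muA : Hom (A ⊗ₒ A) A) (DeA : Hom A (A ⊗ₒ A))
  (rhoBA : Hom (B ⊗ₒ A) B) (deltaBA : Hom B (B ⊗ₒ A))
  (muB : Hom (B ⊗ₒ B) B) (etaB : Hom tunit B) (DeB : Hom B (B ⊗ₒ B)) (epB : Hom B tunit)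
  (rhoXA : Hom (X ⊗ₒ A) X) (deltaXA : Hom X (X ⊗ₒ A))
  (rhoXB : Hom (X ⊗ₒ B) X) (deltaXB : Hom X (X ⊗ₒ B)) : Prop :=
  let rhoXB_A := tens_act X B A DeA rhoXA rhoBA (braid B A) in
  let deltaXB_A := tens_coact X B A muA deltaXA deltaBA (braid A B) in
  is_ydmor (X ⊗ₒ B) X A rhoXB_A deltaXB_A rhoXA deltaXA rhoXB /\
  is_ydmor X (X ⊗ₒ B) A rhoXA deltaXA rhoXB_A deltaXB_A deltaXB /\
  is_yd X B muB etaB DeB epB
    (yd_braid B X A rhoBA deltaXA (braid B X))
    (yd_braid X B A rhoXA deltaBA (braid X B))
    (yd_braid B B A rhoBA deltaBA (braid B B))
    rhoXB deltaXB.

(** * Cross product [H ⋊ X] on [H ⊗ X]: [H] a braided group in an ambient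
    braided category with braidings [PhiXH], [PhiHX], and [X] a braided group
    in crossed modules over [H] with action [rhoX], coaction [deltaX]. *)
Definition cp_mul {C : bsmcat} (H X : Ob C) (muH : Hom (H ⊗ₒ H) H)
  (DeH : Hom H (H ⊗ₒ H)) (muX : Hom (X ⊗ₒ X) X) (rhoX : Hom (X ⊗ₒ H) X)
  (PhiXH : Hom (X ⊗ₒ H) (H ⊗ₒ X)) : Hom ((H ⊗ₒ X) ⊗ₒ (H ⊗ₒ X)) (H ⊗ₒ X).
refine ((muH ⊗ muX) ∘ κ ∘ (idm H ⊗ (idm H ⊗ (rhoX ⊗ idm X))) ∘ κ
          ∘ (idm H ⊗ (PhiXH ⊗ idm (H ⊗ₒ X))) ∘ κ
          ∘ (idm H ⊗ (idm X ⊗ (DeH ⊗ idm X))) ∘ κ).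
all: oeq.
Defined.

Definition cp_unit {C : bsmcat} (H X : Ob C) (etaH : Hom tunit H) (etaX : Hom tunit X)
  : Hom tunit (H ⊗ₒ X) := (etaH ⊗ etaX) ∘ cast (eq_sym (tens1l tunit)).

Definition cp_comul {C : bsmcat} (H X : Ob C) (DeH : Hom H (H ⊗ₒ H))
  (muH : Hom (H ⊗ₒ H) H) (DeX : Hom X (X ⊗ₒ X)) (deltaX : Hom X (X ⊗ₒ H))
  (PhiHX : Hom (H ⊗ₒ X) (X ⊗ₒ H)) : Hom (H ⊗ₒ X) ((H ⊗ₒ X) ⊗ₒ (H ⊗ₒ X)).
refine (κ ∘ (idm H ⊗ (idm X ⊗ (muH ⊗ idm X))) ∘ κ
          ∘ (idm H ⊗ (PhiHX ⊗ idm (H ⊗ₒ X))) ∘ κ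
          ∘ (idm H ⊗ (idm H ⊗ (deltaX ⊗ idm X))) ∘ κ ∘ (DeH ⊗ DeX)).
all: oeq.
Defined.

Definition cp_counit {C : bsmcat} (H X : Ob C) (epH : Hom H tunit) (epX : Hom X tunit)
  : Hom (H ⊗ₒ X) tunit := cast (tens1l tunit) ∘ (epH ⊗ epX).

(** * The identification YD(YD(C)^A_A)^B_B ≅ YD(C)^{A⋊B}_{A⋊B} on objects:
    action mu^B_r ∘ (mu^A_r ⊗ B), coaction (Delta^A_r ⊗ B) ∘ Delta^B_r. *)
Definition nested_act {C : bsmcat} (X A B : Ob C) (rhoA : Hom (X ⊗ₒ A) X)
  (rhoB : Hom (X ⊗ₒ B) X) : Hom (X ⊗ₒ (A ⊗ₒ B)) X :=
  rhoB ∘ (rhoA ⊗ idm B) ∘ cast (tensA X A B).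
Definition nested_coact {C : bsmcat} (X A B : Ob C) (deltaA : Hom X (X ⊗ₒ A))
  (deltaB : Hom X (X ⊗ₒ B)) : Hom X (X ⊗ₒ (A ⊗ₒ B)) :=
  cast (eq_sym (tensA X A B)) ∘ (deltaA ⊗ idm B) ∘ deltaB.

(** * Transport of bialgebra structure maps along an equality of underlying
    objects (in a strict category (A⊗B)⊗C = A⊗(B⊗C)). *)
Definition tr_mul {C : bsmcat} {X Y : Ob C} (e : X = Y) (m : Hom (X ⊗ₒ X) X)
  : Hom (Y ⊗ₒ Y) Y := match e in _ = Z return Hom (Z ⊗ₒ Z) Z with eq_refl => m end.
Definition tr_unit {C : bsmcat} {X Y : Ob C} (e : X = Y) (u : Hom tunit X)
  : Hom tunit Y := match e in _ = Z return Hom tunit Z with eq_refl => u end.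
Definition tr_comul {C : bsmcat} {X Y : Ob C} (e : X = Y) (d : Hom X (X ⊗ₒ X))
  : Hom Y (Y ⊗ₒ Y) := match e in _ = Z return Hom Z (Z ⊗ₒ Z) with eq_refl => d end.
Definition tr_counit {C : bsmcat} {X Y : Ob C} (e : X = Y) (c : Hom X tunit)
  : Hom Y tunit := match e in _ = Z return Hom Z tunit with eq_refl => c end.

(* After expanding the structure maps, the multiplications of (A ⋊ B) ⋊ C and
   A ⋊ (B ⋊ C) are both string diagrams of fifteen elementary boxes on the
   strands A B C A B C, and so are the two comultiplications.  The two
   multiplication diagrams differ only by moves valid in every strict braided
   category (interchange, naturality of the braiding, the hexagon identities),
   by coassociativity of Δ_A and by associativity of the A-action on C; the
   comultiplications, dually, by associativity of μ_A and coassociativity of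
   the A-coaction on C.  No bialgebra or crossed-module compatibility is
   needed.  Units and counits agree by strictness alone. *)

From Stdlib Require Import List ProofIrrelevance.
Import ListNotations.

Existing Class is_bsmcat.

Section StrictCalculus.
Context {K : bsmcat} {HK : is_bsmcat K}.

Lemma compmA {a b c d : Ob K} (f : Hom a b) (g : Hom b c) (h : Hom c d) :
  h ∘ (g ∘ f) = (h ∘ g) ∘ f.
Proof. exact (compA K HK _ _ _ _ f g h). Qed.

Lemma comp1m {a b : Ob K} (f : Hom a b) : idm b ∘ f = f.
Proof. exact (comp1l K HK _ _ f). Qed.

Lemma compm1 {a b : Ob K} (f : Hom a b) : f ∘ idm a = f.
Proof. exact (comp1r K HK _ _ f). Qed.

Lemma tmM {a b c a' b' c' : Ob K} (f : Hom a b) (g : Hom b c) (f' : Hom a' b') (g' : Hom b' c') :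
  (g ∘ f) ⊗ (g' ∘ f') = (g ⊗ g') ∘ (f ⊗ f').
Proof. exact (tm_comp K HK _ _ _ _ _ _ f g f' g'). Qed.

Lemma tm11 (a b : Ob K) : idm a ⊗ idm b = idm (a ⊗ₒ b).
Proof. exact (tm_id K HK a b). Qed.

Lemma tmMP {z a b c a' b' c' : Ob K} (P : Hom (c ⊗ₒ c') z)
  (f : Hom a b) (g : Hom b c) (f' : Hom a' b') (g' : Hom b' c') :
  P ∘ (g ⊗ g') ∘ (f ⊗ f') = P ∘ ((g ∘ f) ⊗ (g' ∘ f')).
Proof. now rewrite tmM, compmA. Qed.

Lemma cast_id (x : Ob K) (e : x = x) : cast e = idm x.
Proof. now rewrite (proof_irrelevance _ e eq_refl). Qed.

Lemma cast_pi {x y : Ob K} (e e' : x = y) : cast e = cast e'.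
Proof. now rewrite (proof_irrelevance _ e e'). Qed.

Lemma cast_comp {x y z : Ob K} (e1 : x = y) (e2 : y = z) :
  cast e2 ∘ cast e1 = cast (eq_trans e1 e2).
Proof. destruct e2, e1. exact (comp1m _). Qed.

Lemma cast_compP {w x y z : Ob K} (P : Hom z w) (e1 : x = y) (e2 : y = z) :
  P ∘ cast e2 ∘ cast e1 = P ∘ cast (eq_trans e1 e2).
Proof. now rewrite <- compmA, cast_comp. Qed.

Lemma idm_conj {x y : Ob K} (e : x = y) : idm x = cast (eq_sym e) ∘ idm y ∘ cast e.
Proof. destruct e. simpl. now rewrite !comp1m. Qed.

Lemma tm_cast {a b c d : Ob K} (e1 : a = b) (e2 : c = d) :
  cast e1 ⊗ cast e2 = cast (f_equal2 tens e1 e2).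
Proof. destruct e1, e2. rewrite !cast_id. apply tm11. Qed.

Lemma tm_castl {a b : Ob K} (e : a = b) (x : Ob K) :
  cast e ⊗ idm x = cast (f_equal (fun z => z ⊗ₒ x) e).
Proof. destruct e. simpl. apply tm11. Qed.

Lemma tm_castr {a b : Ob K} (e : a = b) (x : Ob K) :
  idm x ⊗ cast e = cast (f_equal (fun z => x ⊗ₒ z) e).
Proof. destruct e. simpl. apply tm11. Qed.

Lemma tm_conjl {a b c d a' b' : Ob K} (e1 : b = b') (e2 : a' = a) (x : Hom a b) (y : Hom c d) :
  (cast e1 ∘ x ∘ cast e2) ⊗ y
  = cast (f_equal (fun z => z ⊗ₒ d) e1) ∘ (x ⊗ y) ∘ cast (f_equal (fun z => z ⊗ₒ c) e2).
Proof. destruct e1, e2. simpl. now rewrite !comp1m, !compm1. Qed.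

Lemma tm_conjr {a b c d c' d' : Ob K} (e1 : d = d') (e2 : c' = c) (x : Hom a b) (y : Hom c d) :
  x ⊗ (cast e1 ∘ y ∘ cast e2)
  = cast (f_equal (fun z => b ⊗ₒ z) e1) ∘ (x ⊗ y) ∘ cast (f_equal (fun z => a ⊗ₒ z) e2).
Proof. destruct e1, e2. simpl. now rewrite !comp1m, !compm1. Qed.

Lemma tm_assoc {a b c d e f : Ob K} (x : Hom a b) (y : Hom c d) (z : Hom e f) :
  (x ⊗ y) ⊗ z = cast (tensA b d f) ∘ (x ⊗ (y ⊗ z)) ∘ cast (eq_sym (tensA a c e)).
Proof. now rewrite (tmA K HK), <- compmA, cast_comp, cast_id, compm1. Qed.

Lemma tm_unitl {a b : Ob K} (f : Hom a b) :
  idm tunit ⊗ f = cast (eq_sym (tens1l b)) ∘ f ∘ cast (tens1l a).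
Proof. now rewrite <- compmA, <- (tm1l K HK), compmA, cast_comp, cast_id, comp1m. Qed.

Lemma tm_unitr {a b : Ob K} (f : Hom a b) :
  f ⊗ idm tunit = cast (eq_sym (tens1r b)) ∘ f ∘ cast (tens1r a).
Proof. now rewrite <- compmA, <- (tm1r K HK), compmA, cast_comp, cast_id, comp1m. Qed.

Lemma tm_compl {a b c x y : Ob K} (g : Hom b c) (f : Hom a b) (h : Hom x y) :
  (g ∘ f) ⊗ h = (g ⊗ h) ∘ (f ⊗ idm x).
Proof. now rewrite <- tmM, compm1. Qed.

Lemma tm_compr {a b c x y : Ob K} (g : Hom b c) (f : Hom a b) (h : Hom x y) :
  h ⊗ (g ∘ f) = (h ⊗ g) ∘ (idm x ⊗ f).
Proof. now rewrite <- tmM, compm1. Qed.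

Lemma tm_split {a b c d : Ob K} (g : Hom a b) (h : Hom c d) : g ⊗ h = (g ⊗ idm d) ∘ (idm a ⊗ h).
Proof. now rewrite <- tmM, compm1, comp1m. Qed.

Lemma braid_natP {z a b c d : Ob K} (P : Hom (d ⊗ₒ c) z) (f : Hom a c) (g : Hom b d) :
  P ∘ braid c d ∘ (f ⊗ g) = P ∘ (g ⊗ f) ∘ braid a b.
Proof. now rewrite <- compmA, (braid_nat K HK), compmA. Qed.

Lemma braid_cast {a a' b b' : Ob K} (e1 : a = a') (e2 : b = b') :
  braid a b
  = cast (f_equal2 tens (eq_sym e2) (eq_sym e1)) ∘ braid a' b' ∘ cast (f_equal2 tens e1 e2).
Proof. destruct e1, e2. now rewrite !cast_id, comp1m, compm1. Qed.

End StrictCalculus.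

(* [cast_simpl] merges and erases casts; [casts_out] moves casts out of tensor
   products; [cast_congr] closes goals equal up to the proofs inside casts. *)
Ltac cast_simpl := repeat progress (rewrite ?compmA; rewrite ?cast_compP, ?cast_comp;
  rewrite ?cast_id; rewrite ?comp1m, ?compm1).
Ltac tm_fuse := repeat progress (rewrite ?tmMP; rewrite <- ?tmM).
Ltac casts_out := repeat progress (rewrite ?tm_conjl, ?tm_conjr, ?tm_assoc).
Ltac cast_congr := repeat match goal with
  | |- ?a = ?a => reflexivity
  | |- cast ?e = cast ?e' => apply cast_pi
  | |- _ => f_equal
  end.

Section Words.
Context {K : bsmcat} {HK : is_bsmcat K}.

(* Words of objects stand for their right-bracketed tensor products; the
   singleton word is the object itself, so no trailing unit appears. *)
Fixpoint tensw (u : list (Ob K)) : Ob K :=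
  match u with
  | [] => tunit
  | [x] => x
  | x :: u' => x ⊗ₒ tensw u'
  end.

Definition WHom (u v : list (Ob K)) := Hom (tensw u) (tensw v).

Lemma tensw_cons x w : tensw (x :: w) = x ⊗ₒ tensw w.
Proof. destruct w. - exact (eq_sym (tens1r x)). - reflexivity. Qed.

Lemma tensw_cat u v : tensw (u ++ v) = tensw u ⊗ₒ tensw v.
Proof.
  induction u as [|x u IH].
  - exact (eq_sym (tens1l _)).
  - change ((x :: u) ++ v) with (x :: (u ++ v)).
    rewrite (tensw_cons x (u ++ v)), IH, tensA, <- (tensw_cons x u). reflexivity.
Qed.

Lemma tensw_cat3 u s v : tensw (u ++ s ++ v) = tensw u ⊗ₒ (tensw s ⊗ₒ tensw v).
Proof. now rewrite !tensw_cat. Qed.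

(* [whisker u f v] is [id_u ⊗ f ⊗ id_v]: a box [f] in a string diagram, with
   the strands [u] to its left and [v] to its right. *)
Definition whisker (u : list (Ob K)) {s t} (f : WHom s t) (v : list (Ob K)) :
  WHom (u ++ s ++ v) (u ++ t ++ v) :=
  cast (eq_sym (tensw_cat3 u t v)) ∘ (idm (tensw u) ⊗ (f ⊗ idm (tensw v)))
    ∘ cast (tensw_cat3 u s v).

Definition wcast {u v : list (Ob K)} (e : u = v) : WHom u v := cast (f_equal tensw e).

Lemma idm_tensw_cat p q :
  idm (tensw (p ++ q))
  = cast (eq_sym (tensw_cat p q)) ∘ (idm (tensw p) ⊗ idm (tensw q)) ∘ cast (tensw_cat p q).
Proof. now rewrite tm11, compm1, cast_comp, cast_id. Qed.

End Words.

Ltac whisker_solve := unfold whisker, wcast; rewrite ?idm_tensw_cat; casts_out; cast_simpl;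
  tm_fuse; rewrite ?comp1m, ?compm1; repeat rewrite ?tm11, ?comp1m, ?compm1; cast_simpl;
  cast_congr.

Section Whiskering.
Context {K : bsmcat} {HK : is_bsmcat K}.

Lemma whisker_comp (u v : list (Ob K)) {s r t : list (Ob K)} (f : WHom r t) (g : WHom s r) :
  whisker u f v ∘ whisker u g v = whisker u (f ∘ g) v.
Proof. whisker_solve. Qed.

Lemma cat5A (u a m b v : list (Ob K)) : u ++ a ++ m ++ b ++ v = (u ++ a ++ m) ++ b ++ v.
Proof. now rewrite !app_assoc. Qed.

Lemma whisker_interchange (u m v : list (Ob K)) {s1 t1 s2 t2}
  (f : WHom s1 t1) (g : WHom s2 t2) :
  wcast (eq_sym (cat5A u t1 m t2 v)) ∘ whisker (u ++ t1 ++ m) g v ∘ wcast (cat5A u t1 m s2 v)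
    ∘ whisker u f (m ++ s2 ++ v)
  = whisker u f (m ++ t2 ++ v) ∘ wcast (eq_sym (cat5A u s1 m t2 v)) ∘ whisker (u ++ s1 ++ m) g v
    ∘ wcast (cat5A u s1 m s2 v).
Proof. whisker_solve. Qed.

Lemma cat_whisker (u u' s v' v : list (Ob K)) :
  u ++ (u' ++ s ++ v') ++ v = (u ++ u') ++ s ++ (v' ++ v).
Proof. now rewrite !app_assoc. Qed.

Lemma whisker_whisker (u u' v' v : list (Ob K)) {s t} (f : WHom s t) :
  whisker u (whisker u' f v') v
  = wcast (eq_sym (cat_whisker u u' t v' v)) ∘ whisker (u ++ u') f (v' ++ v)
    ∘ wcast (cat_whisker u u' s v' v).
Proof. whisker_solve. Qed.

Lemma tensw_whisker {u v s t : list (Ob K)} (e : tensw s = tensw t) :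
  tensw (u ++ s ++ v) = tensw (u ++ t ++ v).
Proof. now rewrite !tensw_cat3, e. Qed.

Lemma whisker_cast (u v : list (Ob K)) {s t} (e : tensw s = tensw t) :
  whisker u (cast e : WHom s t) v = cast (tensw_whisker e).
Proof.
  unfold whisker. change (idm (tensw u)) with (cast (eq_refl (tensw u))).
  change (idm (tensw v)) with (cast (eq_refl (tensw v))).
  rewrite !tm_cast. cast_simpl. apply cast_pi.
Qed.

Lemma whisker_conj (u v : list (Ob K)) {s t s' t'} (f : WHom s' t')
  (e1 : tensw t' = tensw t) (e2 : tensw s = tensw s') :
  whisker u (cast e1 ∘ f ∘ cast e2 : WHom s t) v
  = cast (tensw_whisker e1) ∘ whisker u f v ∘ cast (tensw_whisker e2).
Proof. unfold whisker. casts_out. cast_simpl. cast_congr. Qed.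

Lemma tensw_regroup (u u' v v' s : list (Ob K)) (eu : tensw u = tensw u') (ev : tensw v = tensw v') :
  tensw (u ++ s ++ v) = tensw (u' ++ s ++ v').
Proof. now rewrite !tensw_cat3, eu, ev. Qed.

Lemma whisker_regroup (u u' v v' : list (Ob K)) {s t} (f : WHom s t)
  (eu : tensw u = tensw u') (ev : tensw v = tensw v') :
  whisker u f v
  = cast (eq_sym (tensw_regroup u u' v v' t eu ev)) ∘ whisker u' f v'
    ∘ cast (tensw_regroup u u' v v' s eu ev).
Proof. unfold whisker. rewrite (idm_conj eu), (idm_conj ev). casts_out. cast_simpl. cast_congr. Qed.

Definition braidw (s t : list (Ob K)) : WHom (s ++ t) (t ++ s) :=
  cast (eq_sym (tensw_cat t s)) ∘ braid (tensw s) (tensw t) ∘ cast (tensw_cat s t).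

Definition braid2 (x y : Ob K) : WHom [x;y] [y;x] := braid x y.

Lemma braidw11 (x y : Ob K) : braidw [x] [y] = braid2 x y.
Proof. unfold braidw, braid2. now rewrite !cast_id, comp1m, compm1. Qed.

Lemma cat_nil3 (t s : list (Ob K)) : t ++ s = t ++ s ++ [].
Proof. now rewrite app_nil_r. Qed.

Lemma braidw_natl (s s' t : list (Ob K)) (f : WHom s s') :
  braidw s' t ∘ whisker [] f t
  = wcast (eq_sym (cat_nil3 t s')) ∘ whisker t f [] ∘ wcast (cat_nil3 t s)
    ∘ braidw s t.
Proof.
  unfold braidw, whisker, wcast. cbn [tensw]. rewrite ?tm_unitl, ?tm_unitr. casts_out. cast_simpl.
  rewrite braid_natP. cast_simpl. cast_congr.
Qed.

Lemma braidw_natr (s t t' : list (Ob K)) (g : WHom t t') :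
  braidw s t' ∘ wcast (eq_sym (cat_nil3 s t')) ∘ whisker s g [] ∘ wcast (cat_nil3 s t)
  = whisker [] g s ∘ braidw s t.
Proof.
  unfold braidw, whisker, wcast. cbn [tensw]. rewrite ?tm_unitl, ?tm_unitr. casts_out. cast_simpl.
  rewrite braid_natP. cast_simpl. cast_congr.
Qed.

Lemma cat_hex1 (s t r : list (Ob K)) : t ++ (r ++ s) ++ [] = (t ++ r) ++ s.
Proof. now rewrite app_nil_r, app_assoc. Qed.
Lemma cat_hex2 (s t r : list (Ob K)) : (t ++ s) ++ r = t ++ (s ++ r) ++ [].
Proof. now rewrite app_nil_r, app_assoc. Qed.
Lemma cat_hex3 (s t r : list (Ob K)) : s ++ t ++ r = (s ++ t) ++ r.
Proof. now rewrite app_assoc. Qed.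

Lemma braidw_hex1 (s t r : list (Ob K)) :
  braidw s (t ++ r)
  = wcast (cat_hex1 s t r) ∘ whisker t (braidw s r) [] ∘ wcast (cat_hex2 s t r)
    ∘ whisker [] (braidw s t) r ∘ wcast (cat_hex3 s t r).
Proof.
  unfold braidw, whisker, wcast. cbn [tensw]. rewrite (braid_cast eq_refl (tensw_cat t r)), (hex1 K HK).
  rewrite ?tm_unitl, ?tm_unitr. casts_out. cast_simpl. cast_congr.
Qed.

Lemma cat_hex4 (s t r : list (Ob K)) : (s ++ t) ++ r = s ++ (t ++ r) ++ [].
Proof. now rewrite app_nil_r, app_assoc. Qed.
Lemma cat_hex5 (s t r : list (Ob K)) : s ++ (r ++ t) ++ [] = (s ++ r) ++ t.
Proof. now rewrite app_nil_r, app_assoc. Qed.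
Lemma cat_hex6 (s t r : list (Ob K)) : (r ++ s) ++ t = r ++ s ++ t.
Proof. now rewrite app_assoc. Qed.

Lemma braidw_hex2 (s t r : list (Ob K)) :
  braidw (s ++ t) r
  = wcast (cat_hex6 s t r) ∘ whisker [] (braidw s r) t ∘ wcast (cat_hex5 s t r)
    ∘ whisker s (braidw t r) [] ∘ wcast (cat_hex4 s t r).
Proof.
  unfold braidw, whisker, wcast. cbn [tensw]. rewrite (braid_cast (tensw_cat s t) eq_refl), (hex2 K HK).
  rewrite ?tm_unitl, ?tm_unitr. casts_out. cast_simpl. cast_congr.
Qed.

End Whiskering.

Ltac tensw_eq := cbn [tensw app]; rewrite ?tensA, ?tens1l, ?tens1r; reflexivity.
Notation "⟨ u ; v ⟩" := (@cast _ (tensw u) (tensw v) ltac:(tensw_eq)) (only parsing).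

Ltac diagram_solve := unfold whisker, wcast; cbn [tensw app]; rewrite <- ?tm11;
  rewrite ?tm_unitl, ?tm_unitr; casts_out; cast_simpl; tm_fuse; rewrite ?comp1m, ?compm1;
  repeat rewrite ?tm11, ?comp1m, ?compm1; cast_simpl; cast_congr.

Section StringDiagrams.
Context {K : bsmcat} {HK : is_bsmcat K}.

Lemma cp_mul_diagram (H X : Ob K) muH DeH muX rhoX Phi :
  cp_mul H X muH DeH muX rhoX Phi
  = ⟨ [H;X] ; [H ⊗ₒ X] ⟩
    ∘ (whisker [H] (muX : WHom [X;X] [X]) [] ∘ whisker [] (muH : WHom [H;H] [H]) [X;X]
       ∘ whisker [H;H] (rhoX : WHom [X;H] [X]) [X] ∘ whisker [H] (Phi : WHom [X;H] [H;X]) [H;X]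
       ∘ whisker [H;X] (DeH : WHom [H] [H;H]) [X])
    ∘ ⟨ [H ⊗ₒ X; H ⊗ₒ X] ; [H;X;H;X] ⟩.
Proof. unfold cp_mul. diagram_solve. Qed.

Lemma cp_comul_diagram (H X : Ob K) DeH muH DeX deltaX Phi :
  cp_comul H X DeH muH DeX deltaX Phi
  = ⟨ [H;X;H;X] ; [H ⊗ₒ X; H ⊗ₒ X] ⟩
    ∘ (whisker [H;X] (muH : WHom [H;H] [H]) [X] ∘ whisker [H] (Phi : WHom [H;X] [X;H]) [H;X]
       ∘ whisker [H;H] (deltaX : WHom [X] [X;H]) [X] ∘ whisker [] (DeH : WHom [H] [H;H]) [X;X]
       ∘ whisker [H] (DeX : WHom [X] [X;X]) [])
    ∘ ⟨ [H ⊗ₒ X] ; [H;X] ⟩.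
Proof. unfold cp_comul. diagram_solve. Qed.

Lemma tens_act_diagram (X Y H : Ob K) DeH rhoX rhoY Phi :
  tens_act X Y H DeH rhoX rhoY Phi
  = ⟨ [X;Y] ; [X ⊗ₒ Y] ⟩
    ∘ (whisker [X] (rhoY : WHom [Y;H] [Y]) [] ∘ whisker [] (rhoX : WHom [X;H] [X]) [Y;H]
       ∘ whisker [X] (Phi : WHom [Y;H] [H;Y]) [H] ∘ whisker [X;Y] (DeH : WHom [H] [H;H]) [])
    ∘ ⟨ [X ⊗ₒ Y; H] ; [X;Y;H] ⟩.
Proof. unfold tens_act. diagram_solve. Qed.

Lemma tens_coact_diagram (X Y H : Ob K) muH deltaX deltaY Phi :
  tens_coact X Y H muH deltaX deltaY Phi
  = ⟨ [X;Y;H] ; [X ⊗ₒ Y; H] ⟩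
    ∘ (whisker [X;Y] (muH : WHom [H;H] [H]) [] ∘ whisker [X] (Phi : WHom [H;Y] [Y;H]) [H]
       ∘ whisker [] (deltaX : WHom [X] [X;H]) [Y;H] ∘ whisker [X] (deltaY : WHom [Y] [Y;H]) [])
    ∘ ⟨ [X ⊗ₒ Y] ; [X;Y] ⟩.
Proof. unfold tens_coact. diagram_solve. Qed.

Lemma yd_braid_diagram (X Y H : Ob K) rhoX deltaY Phi :
  yd_braid X Y H rhoX deltaY Phi
  = ⟨ [Y;X] ; [Y;X] ⟩
    ∘ (whisker [Y] (rhoX : WHom [X;H] [X]) [] ∘ whisker [] (Phi : WHom [X;Y] [Y;X]) [H]
       ∘ whisker [X] (deltaY : WHom [Y] [Y;H]) [])
    ∘ ⟨ [X;Y] ; [X;Y] ⟩.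
Proof. unfold yd_braid. diagram_solve. Qed.

Lemma nested_act_diagram (X A B : Ob K) rhoA rhoB :
  nested_act X A B rhoA rhoB
  = ⟨ [X] ; [X] ⟩ ∘ ((rhoB : WHom [X;B] [X]) ∘ whisker [] (rhoA : WHom [X;A] [X]) [B])
    ∘ ⟨ [X; A ⊗ₒ B] ; [X;A;B] ⟩.
Proof. unfold nested_act. diagram_solve. Qed.

Lemma nested_coact_diagram (X A B : Ob K) deltaA deltaB :
  nested_coact X A B deltaA deltaB
  = ⟨ [X;A;B] ; [X; A ⊗ₒ B] ⟩
    ∘ (whisker [] (deltaA : WHom [X] [X;A]) [B] ∘ (deltaB : WHom [X] [X;B]))
    ∘ ⟨ [X] ; [X] ⟩.
Proof. unfold nested_coact. diagram_solve. Qed.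

Lemma braid_braidw (s t : list (Ob K)) x y (ex : x = tensw s) (ey : y = tensw t)
  (e1 : tensw [x;y] = tensw (s ++ t)) (e2 : tensw (t ++ s) = tensw [y;x]) :
  braid x y = @cast _ (tensw (t ++ s)) (tensw [y;x]) e2 ∘ braidw s t
              ∘ @cast _ (tensw [x;y]) (tensw (s ++ t)) e1.
Proof. subst x y. unfold braidw. cast_simpl. reflexivity. Qed.

Lemma tr_mul_cast {X Y : Ob K} (e : X = Y) (m : Hom (X ⊗ₒ X) X) :
  tr_mul e m = cast e ∘ m ∘ cast (f_equal2 tens (eq_sym e) (eq_sym e)).
Proof. destruct e. unfold tr_mul. now rewrite !cast_id, comp1m, compm1. Qed.

Lemma tr_unit_cast {X Y : Ob K} (e : X = Y) (u : Hom tunit X) : tr_unit e u = cast e ∘ u.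
Proof. destruct e. unfold tr_unit. now rewrite !cast_id, comp1m. Qed.

Lemma tr_comul_cast {X Y : Ob K} (e : X = Y) (d : Hom X (X ⊗ₒ X)) :
  tr_comul e d = cast (f_equal2 tens e e) ∘ d ∘ cast (eq_sym e).
Proof. destruct e. unfold tr_comul. now rewrite !cast_id, comp1m, compm1. Qed.

Lemma tr_counit_cast {X Y : Ob K} (e : X = Y) (c : Hom X tunit) :
  tr_counit e c = c ∘ cast (eq_sym e).
Proof. destruct e. unfold tr_counit. now rewrite !cast_id, compm1. Qed.

End StringDiagrams.

(* Tactics for rewriting string diagrams kept as left-associated composites
   of whiskered boxes; layer 0 is the rightmost (first applied) box. *)
Ltac normalize_hyp H := cbn [app] in H; unfold wcast in H; rewrite ?cast_id in H;
  rewrite ?comp1m, ?compm1 in H; rewrite ?braidw11 in H; rewrite ?compmA in H.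
Ltac expose_prefix L := lazymatch L with
  | comp (comp ?x ?y) ?z => expose_prefix (comp x y); rewrite <- (compmA z (comp x y))
  | comp ?x ?y => rewrite <- (compmA y x)
  end.
Ltac rewrite_layers H := let T := type of H in lazymatch T with
  | ?L = _ => cbn [app]; first [ rewrite H | (expose_prefix L; cbn [app]; rewrite H) ];
              rewrite ?compmA; cbn [app]
  end.
Ltac layer c k := lazymatch k with
  | O => lazymatch c with comp _ ?x => x | _ => c end
  | S ?k' => lazymatch c with comp ?r _ => layer r k' end end.
(* [interchange k] slides layers [k] and [k+1] of the left-hand side past each
   other; they must act on disjoint strands. *)
Ltac interchange k := lazymatch goal with |- ?L = _ =>
  let Y := layer L k in let X := layer L (S k) in
  lazymatch Y with @whisker _ ?uy ?sy ?ty ?fy ?vy =>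
  lazymatch X with @whisker _ ?ux ?sx ?tx ?fx ?vx =>
   let ly := eval cbn in (length uy + length ty) in
   let lx := eval cbn in (length ux) in
   let b := eval cbn in (Nat.leb ly lx) in
   lazymatch b with
   | true => let m := eval cbn in (skipn ly ux) in
        let H := fresh in pose proof (whisker_interchange uy m vx fy fx) as H;
        normalize_hyp H; rewrite_layers H; clear H
   | false => let lx2 := eval cbn in (length ux + length sx) in
        let m := eval cbn in (skipn lx2 uy) in
        let H := fresh in pose proof (whisker_interchange ux m vy fx fy) as H;
        normalize_hyp H; symmetry in H; rewrite_layers H; clear H
   end end end end.
Ltac flatten_in H := repeat match type of H with
  | context [@whisker _ ?u _ _ (@whisker _ ?u' ?s ?t ?f ?v') ?v] =>
   let E := fresh in pose proof (@whisker_whisker _ _ u u' v' v s t f) as E;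
   cbn [app] in E, H; rewrite E in H; clear E end.
Ltac whiskered_rewrite E u v := let H := fresh in
  pose proof (f_equal (fun z => whisker u z v) E) as H; cbn beta in H;
  rewrite <- ?whisker_comp in H; flatten_in H; normalize_hyp H; rewrite_layers H; clear H.
Ltac freeze_rhs := match goal with |- _ = ?R => let r := fresh "R" in set (r := R) end.

Section DiagramEquations.
Context {K : bsmcat} {HK : is_bsmcat K} (A B C : Ob K)
  (muA : WHom [A;A] [A]) (DeA : WHom [A] [A;A])
  (rhoBA : WHom [B;A] [B]) (deltaBA : WHom [B] [B;A])
  (muB : WHom [B;B] [B]) (DeB : WHom [B] [B;B])
  (rhoCA : WHom [C;A] [C]) (deltaCA : WHom [C] [C;A])
  (rhoCB : WHom [C;B] [C]) (deltaCB : WHom [C] [C;B])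
  (muC : WHom [C;C] [C]) (DeC : WHom [C] [C;C]).

Lemma mul_diagram_eq
  (rhoCA_assoc : rhoCA ∘ whisker [C] muA [] = rhoCA ∘ whisker [] rhoCA [A])
  (DeA_coassoc : whisker [A] DeA [] ∘ DeA = whisker [] DeA [A] ∘ DeA) :
  whisker [A;B] muC [] ∘ whisker [A] muB [C;C] ∘ whisker [] muA [B;B;C;C]
  ∘ whisker [A;A] rhoBA [B;C;C] ∘ whisker [A] (braid2 B A) [A;B;C;C]
  ∘ whisker [A;B] DeA [B;C;C] ∘ whisker [A;B;A;B] rhoCB [C] ∘ whisker [A;B;A;B] rhoCA [B;C]
  ∘ whisker [A;B;A] (braid2 C B) [A;B;C] ∘ whisker [A;B] (braid2 C A) [B;A;B;C]
  ∘ whisker [A;B;C;A;B] muA [B;C] ∘ whisker [A;B;C;A] (braid2 A B) [A;B;C]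
  ∘ whisker [A;B;C;A;A] deltaBA [B;C] ∘ whisker [A;B;C] DeA [B;B;C] ∘ whisker [A;B;C;A] DeB [C]
  =
  whisker [A;B] muC [] ∘ whisker [A] muB [C;C] ∘ whisker [A;B;B] rhoCB [C]
  ∘ whisker [A;B;B] rhoCA [B;C] ∘ whisker [A;B] (braid2 C B) [A;B;C]
  ∘ whisker [A;B;C] deltaBA [B;C] ∘ whisker [A;B;C] DeB [C] ∘ whisker [] muA [B;C;B;C]
  ∘ whisker [A;A;B] rhoCA [B;C] ∘ whisker [A;A] rhoBA [C;A;B;C]
  ∘ whisker [A;A;B] (braid2 C A) [A;B;C] ∘ whisker [A;A;B;C] DeA [B;C]
  ∘ whisker [A] (braid2 B A) [C;A;B;C] ∘ whisker [A;B] (braid2 C A) [A;B;C]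
  ∘ whisker [A;B;C] DeA [B;C].
Proof.
  freeze_rhs. rewrite ?compmA.
  interchange 12. interchange 13. interchange 12.
  interchange 4. interchange 5.
  whiskered_rewrite rhoCA_assoc [A;B;A;B] [B;C].
  interchange 3.
  pose proof (braidw_hex2 [C] [A] [B]) as hex2. normalize_hyp hex2. symmetry in hex2.
  whiskered_rewrite hex2 [A;B;A] [A;B;C].
  pose proof (braidw_natl [C;A] [C] [B] rhoCA) as natl. normalize_hyp natl. symmetry in natl.
  whiskered_rewrite natl [A;B;A] [A;B;C].
  interchange 7. interchange 6. interchange 5. interchange 4.
  pose proof (braidw_natr [C] [A] [A;A] DeA) as natr. normalize_hyp natr. symmetry in natr.
  whiskered_rewrite natr [A;B] [A;B;A;B;C].
  pose proof (braidw_hex1 [C] [A] [A]) as hex1. normalize_hyp hex1.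
  whiskered_rewrite hex1 [A;B] [A;B;A;B;C].
  interchange 2.
  symmetry in DeA_coassoc. whiskered_rewrite DeA_coassoc [A;B;C] [B;B;C].
  interchange 3. interchange 4. interchange 5.
  interchange 0. interchange 1. interchange 2. interchange 3. interchange 4.
  interchange 9. interchange 8. interchange 7. interchange 6. interchange 5.
  interchange 10. interchange 9. interchange 8. interchange 7. interchange 6.
  interchange 4. interchange 3. interchange 1. interchange 2.
  subst R. symmetry. freeze_rhs. rewrite ?compmA.
  interchange 5. interchange 7. interchange 8. interchange 9. interchange 10.
  interchange 11. interchange 12. interchange 13. interchange 12.
  subst R. reflexivity.
Qed.

Lemma comul_diagram_eq
  (deltaCA_coassoc : whisker [C] DeA [] ∘ deltaCA = whisker [] deltaCA [A] ∘ deltaCA)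
  (muA_assoc : muA ∘ whisker [] muA [A] = muA ∘ whisker [A] muA []) :
  whisker [A;B;C;A] muB [C] ∘ whisker [A;B;C] muA [B;B;C] ∘ whisker [A;B;C;A;A] rhoBA [B;C]
  ∘ whisker [A;B;C;A] (braid2 B A) [A;B;C] ∘ whisker [A;B;C;A;B] DeA [B;C]
  ∘ whisker [A;B] (braid2 A C) [B;A;B;C] ∘ whisker [A;B;A] (braid2 B C) [A;B;C]
  ∘ whisker [A;B;A;B] deltaCA [B;C] ∘ whisker [A;B;A;B] deltaCB [C] ∘ whisker [A;B] muA [B;C;C]
  ∘ whisker [A] (braid2 A B) [A;B;C;C] ∘ whisker [A;A] deltaBA [B;C;C]
  ∘ whisker [] DeA [B;B;C;C] ∘ whisker [A] DeB [C;C] ∘ whisker [A;B] DeC []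
  =
  whisker [A;B;C] muA [B;C] ∘ whisker [A;B] (braid2 A C) [A;B;C]
  ∘ whisker [A] (braid2 A B) [C;A;B;C] ∘ whisker [A;A;B;C] muA [B;C]
  ∘ whisker [A;A;B] (braid2 A C) [A;B;C] ∘ whisker [A;A] deltaBA [C;A;B;C]
  ∘ whisker [A;A;B] deltaCA [B;C] ∘ whisker [] DeA [B;C;B;C] ∘ whisker [A;B;C] muB [C]
  ∘ whisker [A;B;C] rhoBA [B;C] ∘ whisker [A;B] (braid2 B C) [A;B;C]
  ∘ whisker [A;B;B] deltaCA [B;C] ∘ whisker [A;B;B] deltaCB [C] ∘ whisker [A] DeB [C;C]
  ∘ whisker [A;B] DeC [].
Proof.
  freeze_rhs. rewrite ?compmA.
  interchange 0. interchange 1. interchange 2. interchange 3. interchange 4. interchange 13.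
  interchange 9. interchange 8.
  whiskered_rewrite deltaCA_coassoc [A;B;A;B] [B;C].
  interchange 10.
  pose proof (braidw_hex1 [B] [C] [A]) as hex1. normalize_hyp hex1. symmetry in hex1.
  whiskered_rewrite hex1 [A;B;A] [A;B;C].
  pose proof (braidw_natr [B] [C] [C;A] deltaCA) as natr. normalize_hyp natr.
  whiskered_rewrite natr [A;B;A] [A;B;C].
  interchange 4. interchange 5. interchange 6. interchange 7. interchange 8.
  pose proof (braidw_natl [A;A] [A] [C] muA) as natl. normalize_hyp natl.
  whiskered_rewrite natl [A;B] [A;B;A;B;C].
  pose proof (braidw_hex2 [A] [A] [C]) as hex2. normalize_hyp hex2.
  whiskered_rewrite hex2 [A;B] [A;B;A;B;C].
  interchange 11. interchange 12.
  whiskered_rewrite muA_assoc [A;B;C] [B;C].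
  interchange 3. interchange 4. interchange 5. interchange 6. interchange 7. interchange 8.
  interchange 10. interchange 11. interchange 12. interchange 2. interchange 3. interchange 4.
  interchange 5. interchange 6. interchange 9. interchange 10. interchange 11. interchange 1.
  interchange 2. interchange 3. interchange 4. interchange 8. interchange 9. interchange 0.
  interchange 7. interchange 8. interchange 6. interchange 7. interchange 5. interchange 6.
  subst R. reflexivity.
Qed.

End DiagramEquations.

Ltac flatten := repeat progress (rewrite ?whisker_conj; rewrite <- ?whisker_comp;
  rewrite ?whisker_cast; cbn [app];
  repeat match goal with |- context [@whisker _ ?u _ _ (@whisker _ ?u' ?s ?t ?f ?v') ?v] =>
    let E := fresh in pose proof (@whisker_whisker _ _ u u' v' v s t f) as E;
    cbn [app] in E |- *; rewrite E; clear E end;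
  unfold wcast; cbn [app]).

Section CrossProductDiagrams.
Context {K : bsmcat} {HK : is_bsmcat K} (A B C : Ob K)
  (muA : WHom [A;A] [A]) (DeA : WHom [A] [A;A])
  (rhoBA : WHom [B;A] [B]) (deltaBA : WHom [B] [B;A])
  (muB : WHom [B;B] [B]) (DeB : WHom [B] [B;B])
  (rhoCA : WHom [C;A] [C]) (deltaCA : WHom [C] [C;A])
  (rhoCB : WHom [C;B] [C]) (deltaCB : WHom [C] [C;B])
  (muC : WHom [C;C] [C]) (DeC : WHom [C] [C;C]).

Lemma tensw_ABC_ABC : (A ⊗ₒ (B ⊗ₒ C)) ⊗ₒ (A ⊗ₒ (B ⊗ₒ C)) = tensw [A;B;C;A;B;C].
Proof. cbn [tensw]. now rewrite ?tensA. Qed.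

Lemma cp_mul_assocl_diagram :
  tr_mul (eq_sym (tensA A B C))
    (cp_mul (A ⊗ₒ B) C (cp_mul A B muA DeA muB rhoBA (braid B A))
       (cp_comul A B DeA muA DeB deltaBA (braid A B)) muC (nested_act C A B rhoCA rhoCB)
       (braid C (A ⊗ₒ B)))
  = (whisker [A;B] muC [] ∘ whisker [A] muB [C;C] ∘ whisker [] muA [B;B;C;C]
     ∘ whisker [A;A] rhoBA [B;C;C] ∘ whisker [A] (braid2 B A) [A;B;C;C]
     ∘ whisker [A;B] DeA [B;C;C] ∘ whisker [A;B;A;B] rhoCB [C] ∘ whisker [A;B;A;B] rhoCA [B;C]
     ∘ whisker [A;B;A] (braid2 C B) [A;B;C] ∘ whisker [A;B] (braid2 C A) [B;A;B;C]
     ∘ whisker [A;B;C;A;B] muA [B;C] ∘ whisker [A;B;C;A] (braid2 A B) [A;B;C]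
     ∘ whisker [A;B;C;A;A] deltaBA [B;C] ∘ whisker [A;B;C] DeA [B;B;C]
     ∘ whisker [A;B;C;A] DeB [C])
    ∘ cast tensw_ABC_ABC.
Proof.
  freeze_rhs.
  rewrite tr_mul_cast, (cp_mul_diagram (A ⊗ₒ B) C), (cp_mul_diagram A B), (cp_comul_diagram A B),
    nested_act_diagram.
  rewrite (braid_braidw [C] [A;B] C (A ⊗ₒ B) eq_refl eq_refl ltac:(tensw_eq) ltac:(tensw_eq)).
  pose proof (braidw_hex1 [C] [A] [B]) as hex. cbn [app] in hex. rewrite hex. unfold wcast.
  cbn [app]. rewrite ?braidw11.
  rewrite (whisker_regroup [A ⊗ₒ B] [A;B] [] [] _ eq_refl eq_refl).
  rewrite (whisker_regroup [A ⊗ₒ B; A ⊗ₒ B] [A;B;A;B] [C] [C] _ ltac:(tensw_eq) eq_refl).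
  rewrite (whisker_regroup [A ⊗ₒ B] [A;B] [A ⊗ₒ B; C] [A;B;C] _ eq_refl ltac:(tensw_eq)).
  rewrite (whisker_regroup [A ⊗ₒ B; C] [A;B;C] [C] [C] _ ltac:(tensw_eq) eq_refl).
  flatten. cast_simpl. subst R. rewrite ?compmA. unfold braid2. cast_congr.
Qed.

Lemma cp_mul_assocr_diagram :
  cp_mul A (B ⊗ₒ C) muA DeA
    (cp_mul B C muB DeB muC rhoCB (yd_braid C B A rhoCA deltaBA (braid C B)))
    (tens_act B C A DeA rhoBA rhoCA (braid C A)) (braid (B ⊗ₒ C) A)
  = (whisker [A;B] muC [] ∘ whisker [A] muB [C;C] ∘ whisker [A;B;B] rhoCB [C]
     ∘ whisker [A;B;B] rhoCA [B;C] ∘ whisker [A;B] (braid2 C B) [A;B;C]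
     ∘ whisker [A;B;C] deltaBA [B;C] ∘ whisker [A;B;C] DeB [C] ∘ whisker [] muA [B;C;B;C]
     ∘ whisker [A;A;B] rhoCA [B;C] ∘ whisker [A;A] rhoBA [C;A;B;C]
     ∘ whisker [A;A;B] (braid2 C A) [A;B;C] ∘ whisker [A;A;B;C] DeA [B;C]
     ∘ whisker [A] (braid2 B A) [C;A;B;C] ∘ whisker [A;B] (braid2 C A) [A;B;C]
     ∘ whisker [A;B;C] DeA [B;C])
    ∘ cast tensw_ABC_ABC.
Proof.
  freeze_rhs.
  rewrite (cp_mul_diagram A (B ⊗ₒ C)), (cp_mul_diagram B C), yd_braid_diagram, tens_act_diagram.
  rewrite (braid_braidw [B;C] [A] (B ⊗ₒ C) A eq_refl eq_refl ltac:(tensw_eq) ltac:(tensw_eq)).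
  pose proof (braidw_hex2 [B] [C] [A]) as hex. cbn [app] in hex. rewrite hex. unfold wcast.
  rewrite ?braidw11.
  rewrite (whisker_regroup [] [] [B ⊗ₒ C; B ⊗ₒ C] [B;C;B;C] _ eq_refl ltac:(tensw_eq)).
  rewrite (whisker_regroup [A;A] [A;A] [B ⊗ₒ C] [B;C] _ eq_refl eq_refl).
  rewrite (whisker_regroup [A] [A] [A; B ⊗ₒ C] [A;B;C] _ eq_refl eq_refl).
  rewrite (whisker_regroup [A; B ⊗ₒ C] [A;B;C] [B ⊗ₒ C] [B;C] _ ltac:(tensw_eq) eq_refl).
  flatten. cast_simpl. subst R. unfold braid2. cast_congr.
Qed.

Lemma cp_comul_assocl_diagram :
  tr_comul (eq_sym (tensA A B C))
    (cp_comul (A ⊗ₒ B) C (cp_comul A B DeA muA DeB deltaBA (braid A B))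
       (cp_mul A B muA DeA muB rhoBA (braid B A)) DeC (nested_coact C A B deltaCA deltaCB)
       (braid (A ⊗ₒ B) C))
  = cast (eq_sym tensw_ABC_ABC)
    ∘ (whisker [A;B;C;A] muB [C] ∘ whisker [A;B;C] muA [B;B;C]
       ∘ whisker [A;B;C;A;A] rhoBA [B;C] ∘ whisker [A;B;C;A] (braid2 B A) [A;B;C]
       ∘ whisker [A;B;C;A;B] DeA [B;C] ∘ whisker [A;B] (braid2 A C) [B;A;B;C]
       ∘ whisker [A;B;A] (braid2 B C) [A;B;C] ∘ whisker [A;B;A;B] deltaCA [B;C]
       ∘ whisker [A;B;A;B] deltaCB [C] ∘ whisker [A;B] muA [B;C;C]
       ∘ whisker [A] (braid2 A B) [A;B;C;C] ∘ whisker [A;A] deltaBA [B;C;C]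
       ∘ whisker [] DeA [B;B;C;C] ∘ whisker [A] DeB [C;C] ∘ whisker [A;B] DeC []).
Proof.
  freeze_rhs.
  rewrite tr_comul_cast, (cp_comul_diagram (A ⊗ₒ B) C), (cp_mul_diagram A B),
    (cp_comul_diagram A B), nested_coact_diagram.
  rewrite (braid_braidw [A;B] [C] (A ⊗ₒ B) C eq_refl eq_refl ltac:(tensw_eq) ltac:(tensw_eq)).
  pose proof (braidw_hex2 [A] [B] [C]) as hex. cbn [app] in hex. rewrite hex. unfold wcast.
  rewrite ?braidw11.
  rewrite (whisker_regroup [A ⊗ₒ B; C] [A;B;C] [C] [C] _ ltac:(tensw_eq) eq_refl).
  rewrite (whisker_regroup [A ⊗ₒ B] [A;B] [A ⊗ₒ B; C] [A;B;C] _ eq_refl ltac:(tensw_eq)).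
  rewrite (whisker_regroup [A ⊗ₒ B; A ⊗ₒ B] [A;B;A;B] [C] [C] _ ltac:(tensw_eq) eq_refl).
  rewrite (whisker_regroup [A ⊗ₒ B] [A;B] [] [] _ eq_refl eq_refl).
  flatten. cast_simpl. subst R. rewrite ?compmA. unfold braid2. cast_congr.
Qed.

Lemma cp_comul_assocr_diagram :
  cp_comul A (B ⊗ₒ C) DeA muA
    (cp_comul B C DeB muB DeC deltaCB (yd_braid B C A rhoBA deltaCA (braid B C)))
    (tens_coact B C A muA deltaBA deltaCA (braid A C)) (braid A (B ⊗ₒ C))
  = cast (eq_sym tensw_ABC_ABC)
    ∘ (whisker [A;B;C] muA [B;C] ∘ whisker [A;B] (braid2 A C) [A;B;C]
       ∘ whisker [A] (braid2 A B) [C;A;B;C] ∘ whisker [A;A;B;C] muA [B;C]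
       ∘ whisker [A;A;B] (braid2 A C) [A;B;C] ∘ whisker [A;A] deltaBA [C;A;B;C]
       ∘ whisker [A;A;B] deltaCA [B;C] ∘ whisker [] DeA [B;C;B;C] ∘ whisker [A;B;C] muB [C]
       ∘ whisker [A;B;C] rhoBA [B;C] ∘ whisker [A;B] (braid2 B C) [A;B;C]
       ∘ whisker [A;B;B] deltaCA [B;C] ∘ whisker [A;B;B] deltaCB [C] ∘ whisker [A] DeB [C;C]
       ∘ whisker [A;B] DeC []).
Proof.
  freeze_rhs.
  rewrite (cp_comul_diagram A (B ⊗ₒ C)), (cp_comul_diagram B C), yd_braid_diagram,
    tens_coact_diagram.
  rewrite (braid_braidw [A] [B;C] A (B ⊗ₒ C) eq_refl eq_refl ltac:(tensw_eq) ltac:(tensw_eq)).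
  pose proof (braidw_hex1 [A] [B] [C]) as hex. cbn [app] in hex. rewrite hex. unfold wcast.
  rewrite ?braidw11.
  rewrite (whisker_regroup [A; B ⊗ₒ C] [A;B;C] [B ⊗ₒ C] [B;C] _ ltac:(tensw_eq) eq_refl).
  rewrite (whisker_regroup [A] [A] [A; B ⊗ₒ C] [A;B;C] _ eq_refl eq_refl).
  rewrite (whisker_regroup [A;A] [A;A] [B ⊗ₒ C] [B;C] _ eq_refl eq_refl).
  rewrite (whisker_regroup [] [] [B ⊗ₒ C; B ⊗ₒ C] [B;C;B;C] _ eq_refl ltac:(tensw_eq)).
  flatten. cast_simpl. subst R. rewrite ?compmA. unfold braid2. cast_congr.
Qed.

End CrossProductDiagrams.

(* [tm_normalize] splits every tensor product into layers with a single
   non-identity factor, then pushes all casts outwards. *)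
Ltac is_identity t := lazymatch t with idm _ => idtac | tm ?a ?b => is_identity a; is_identity b end.
Ltac split_tm_once := match goal with |- context [tm ?g ?h] =>
  tryif is_identity g then fail else tryif is_identity h then fail else rewrite (tm_split g h) end.
Ltac tm_normalize := unfold whisker, wcast; cbn [tensw app];
  repeat progress (rewrite ?tm_compl, ?tm_compr, ?tm_castl, ?tm_castr; try split_tm_once);
  rewrite <- ?tm11; repeat progress (rewrite ?tm_unitl, ?tm_unitr, ?tm_assoc; casts_out);
  cast_simpl.

Section UnitsAndWhiskeredAxioms.
Context {K : bsmcat} {HK : is_bsmcat K}.

Lemma cp_unit_assoc (A B C : Ob K) (etaA : Hom tunit A) (etaB : Hom tunit B) (etaC : Hom tunit C) :
  tr_unit (eq_sym (tensA A B C)) (cp_unit (A ⊗ₒ B) C (cp_unit A B etaA etaB) etaC)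
  = cp_unit A (B ⊗ₒ C) etaA (cp_unit B C etaB etaC).
Proof. rewrite tr_unit_cast. unfold cp_unit. tm_normalize. cast_congr. Qed.

Lemma cp_counit_assoc (A B C : Ob K) (epA : Hom A tunit) (epB : Hom B tunit) (epC : Hom C tunit) :
  tr_counit (eq_sym (tensA A B C)) (cp_counit (A ⊗ₒ B) C (cp_counit A B epA epB) epC)
  = cp_counit A (B ⊗ₒ C) epA (cp_counit B C epB epC).
Proof.
  rewrite tr_counit_cast. unfold cp_counit.
  rewrite (tm_split (cast (tens1l tunit) ∘ (epA ⊗ epB)) epC). tm_normalize. cast_congr.
Qed.

Lemma is_rmod_whisker (X H : Ob K) muH etaH rho : is_rmod X H muH etaH rho ->
  (rho : WHom [X;H] [X]) ∘ whisker [X] (muH : WHom [H;H] [H]) []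
  = rho ∘ whisker [] (rho : WHom [X;H] [X]) [H].
Proof. intros [rho_assoc _]. tm_normalize. rewrite <- rho_assoc. cast_congr. Qed.

Lemma is_rcomod_whisker (X H : Ob K) DeH epH delta : is_rcomod X H DeH epH delta ->
  whisker [X] (DeH : WHom [H] [H;H]) [] ∘ (delta : WHom [X] [X;H])
  = whisker [] (delta : WHom [X] [X;H]) [H] ∘ delta.
Proof. intros [delta_coassoc _]. tm_normalize. rewrite <- delta_coassoc. cast_simpl. cast_congr. Qed.

Lemma bgroup_assoc_whisker (X : Ob K) Phi mu eta De ep S : bgroup X Phi mu eta De ep S ->
  (mu : WHom [X;X] [X]) ∘ whisker [] (mu : WHom [X;X] [X]) [X]
  = mu ∘ whisker [X] (mu : WHom [X;X] [X]) [].
Proof. intros [mu_assoc _]. tm_normalize. rewrite <- mu_assoc. cast_congr. Qed.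

Lemma bgroup_coassoc_whisker (X : Ob K) Phi mu eta De ep S : bgroup X Phi mu eta De ep S ->
  whisker [X] (De : WHom [X] [X;X]) [] ∘ De = whisker [] (De : WHom [X] [X;X]) [X] ∘ De.
Proof.
  intros (_ & _ & _ & De_coassoc & _). tm_normalize. rewrite <- De_coassoc. cast_simpl. cast_congr.
Qed.

End UnitsAndWhiskeredAxioms.

Theorem mainTheorem14 (K : bsmcat) (HK : is_bsmcat K) (A B C : Ob K)
  (muA : Hom (A ⊗ₒ A) A) (etaA : Hom tunit A) (DeA : Hom A (A ⊗ₒ A))
  (epA : Hom A tunit) (SA : Hom A A)
  (hA : bgroup A (braid A A) muA etaA DeA epA SA)
  (rhoBA : Hom (B ⊗ₒ A) B) (deltaBA : Hom B (B ⊗ₒ A))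
  (muB : Hom (B ⊗ₒ B) B) (etaB : Hom tunit B) (DeB : Hom B (B ⊗ₒ B))
  (epB : Hom B tunit) (SB : Hom B B)
  (hB : is_bg_yd B A muA etaA DeA epA (braid A B) (braid B A) (braid A A) (braid B B)
          rhoBA deltaBA muB etaB DeB epB SB)
  (rhoCA : Hom (C ⊗ₒ A) C) (deltaCA : Hom C (C ⊗ₒ A))
  (rhoCB : Hom (C ⊗ₒ B) C) (deltaCB : Hom C (C ⊗ₒ B))
  (hCA : is_yd C A muA etaA DeA epA (braid A C) (braid C A) (braid A A) rhoCA deltaCA)
  (hCB : is_yd_D A B C muA DeA rhoBA deltaBA muB etaB DeB epB
           rhoCA deltaCA rhoCB deltaCB)
  (muC : Hom (C ⊗ₒ C) C) (etaC : Hom tunit C) (DeC : Hom C (C ⊗ₒ C))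
  (epC : Hom C tunit) (SC : Hom C C)
  (hC : is_bg_yd C (A ⊗ₒ B)
          (cp_mul A B muA DeA muB rhoBA (braid B A))
          (cp_unit A B etaA etaB)
          (cp_comul A B DeA muA DeB deltaBA (braid A B))
          (cp_counit A B epA epB)
          (braid (A ⊗ₒ B) C) (braid C (A ⊗ₒ B)) (braid (A ⊗ₒ B) (A ⊗ₒ B)) (braid C C)
          (nested_act C A B rhoCA rhoCB) (nested_coact C A B deltaCA deltaCB)
          muC etaC DeC epC SC) :
  let e := eq_sym (tensA A B C) in
  let muAB := cp_mul A B muA DeA muB rhoBA (braid B A) in
  let etaAB := cp_unit A B etaA etaB in
  let DeAB := cp_comul A B DeA muA DeB deltaBA (braid A B) in
  let epAB := cp_counit A B epA epB in
  (* [B ⋊ C] is formed in YD(K)^A_A, whose braiding is [yd_braid]. *)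
  let muBC := cp_mul B C muB DeB muC rhoCB (yd_braid C B A rhoCA deltaBA (braid C B)) in
  let etaBC := cp_unit B C etaB etaC in
  let DeBC := cp_comul B C DeB muB DeC deltaCB (yd_braid B C A rhoBA deltaCA (braid B C)) in
  let epBC := cp_counit B C epB epC in
  let rhoBC := tens_act B C A DeA rhoBA rhoCA (braid C A) in
  let deltaBC := tens_coact B C A muA deltaBA deltaCA (braid A C) in
  tr_mul e (cp_mul (A ⊗ₒ B) C muAB DeAB muC (nested_act C A B rhoCA rhoCB) (braid C (A ⊗ₒ B)))
    = cp_mul A (B ⊗ₒ C) muA DeA muBC rhoBC (braid (B ⊗ₒ C) A) /\
  tr_unit e (cp_unit (A ⊗ₒ B) C etaAB etaC) = cp_unit A (B ⊗ₒ C) etaA etaBC /\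
  tr_comul e (cp_comul (A ⊗ₒ B) C DeAB muAB DeC (nested_coact C A B deltaCA deltaCB)
                (braid (A ⊗ₒ B) C))
    = cp_comul A (B ⊗ₒ C) DeA muA DeBC deltaBC (braid A (B ⊗ₒ C)) /\
  tr_counit e (cp_counit (A ⊗ₒ B) C epAB epC) = cp_counit A (B ⊗ₒ C) epA epBC.
Proof.
  cbv zeta.
  destruct hCA as [rhoCA_mod [deltaCA_comod _]].
  pose proof (is_rmod_whisker C A muA etaA rhoCA rhoCA_mod) as rhoCA_assoc.
  pose proof (is_rcomod_whisker C A DeA epA deltaCA deltaCA_comod) as deltaCA_coassoc.
  pose proof (bgroup_assoc_whisker A _ _ _ _ _ _ hA) as muA_assoc.
  pose proof (bgroup_coassoc_whisker A _ _ _ _ _ _ hA) as DeA_coassoc.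
  split; [|split; [|split]].
  - rewrite cp_mul_assocl_diagram, cp_mul_assocr_diagram.
    f_equal. apply mul_diagram_eq; assumption.
  - apply cp_unit_assoc.
  - rewrite cp_comul_assocl_diagram, cp_comul_assocr_diagram.
    f_equal. apply comul_diagram_eq; assumption.
  - apply cp_counit_assoc.
Qed.
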